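(* In the situation of Lemma 7.1 (i.e. $X$ periodic, $e\in E(X)$, $Z_n=\{z\in Z(X):z^n\in H_e\}$, and $Z_\ell\setminus H_e$ infinite for some $\ell\in\mathbb N$), one can find a set $F'\subseteq X$ with at most two elements and an infinite set $A'\subseteq Z_\ell$ such that $A'A'\subseteq F'\cup H_e$ and $A'\cap F'X^1=\emptyset$.
   Context: Periodic: every element has an idempotent power. $E(X)$: idempotents; $H_e$: maximal subgroup containing $e$; $Z(X)$: center. $X^1=X\cup\{1\}$ with adjoined identity, $F'X^1=\{fx:f\in F',x\in X^1\}$, $A'A'=\{ab:a,b\in A'\}$. *)

From Stdlib Require Import Arith List.

Section SemigroupDefs.
Variable T : Type.
Variable mul : T -> T -> T.

(* spow x n = x^(n+1)  (semigroups have no x^0) *)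
Fixpoint spow (x : T) (n : nat) : T :=
  match n with
  | 0 => x
  | S m => mul x (spow x m)
  end.

Definition pw (x : T) (n : nat) : T := spow x (n - 1).

Definition idempotent (x : T) : Prop := mul x x = x.

Definition periodic : Prop :=
  forall x : T, exists n : nat, 1 <= n /\ idempotent (pw x n).

Definition center (z : T) : Prop := forall x : T, mul z x = mul x z.

(* H_e: the maximal subgroup containing the idempotent e, i.e. the group of
   units of the monoid eXe (equivalently the H-class of e). *)
Definition Hgrp (e x : T) : Prop :=
  mul e x = x /\ mul x e = x /\
  exists y : T, mul e y = y /\ mul y e = y /\ mul x y = e /\ mul y x = e.

Definition Zn (e : T) (n : nat) (z : T) : Prop := center z /\ Hgrp e (pw z n).

Definition finite_set (A : T -> Prop) : Prop :=
  exists l : list T, forall x, A x -> In x l.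
Definition infinite_set (A : T -> Prop) : Prop := ~ finite_set A.

(* F'X^1 = { f x : f in F', x in X^1 } *)
Definition FX1 (F : T -> Prop) (y : T) : Prop :=
  F y \/ exists f x, F f /\ y = mul f x.

End SemigroupDefs.
Arguments spow {T}. Arguments pw {T}. Arguments idempotent {T}. Arguments periodic {T}. Arguments center {T}. Arguments Hgrp {T}. Arguments Zn {T}. Arguments finite_set {T}. Arguments infinite_set {T}. Arguments FX1 {T}.

From Stdlib Require Import Arith List Lia Classical ClassicalEpsilon.

(* Write "x is e-fixed" for e x = x.  A central element of Z_l that is
   e-fixed lies in H_e, so it suffices to find an infinite A' in Z_l whose
   products are e-fixed, up to at most two exceptional values.  Starting
   from C = Z_l \ H_e we run a descent on a level k such that the powers
   (c c)^(k+1) of squares of elements of C are e-fixed (k = l initially).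
   At each stage either the squares of C form an infinite set, or
   infinitely many c in C
   share one square s; in the latter case either some row d0 D is infinite,
   or (a Ramsey-type chain argument) there is a sequence b_i with
   b_i b_j = f_i for i < j.  In every branch we either obtain an infinite
   new set C' whose products are controlled by a square t (t t = x x and
   t divides x y for x, y in C'), which lowers k by one, or the
   products of a set A' take only the values s and f0, giving F' = {s, f0}.
   When k = 0 all products are e-fixed and F' is empty. *)

Lemma finite_or_infinite {T} (C : T -> Prop) : finite_set C \/ infinite_set C.
Proof. destruct (classic (finite_set C)); [left | right]; assumption. Qed.

Lemma infinite_nonempty {T} (C : T -> Prop) : infinite_set C -> exists c, C c.
Proof.
  intros HC. apply NNPP; intros Hempty. apply HC.
  exists nil. intros x Hx. exfalso. eauto.
Qed.

Lemma infinite_mono {T} (C D : T -> Prop) :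
  infinite_set C -> (forall x, C x -> D x) -> infinite_set D.
Proof. intros HC HCD [L HL]. apply HC. exists L. auto. Qed.

Lemma infinite_remove {T} (C : T -> Prop) (b : T) :
  infinite_set C -> infinite_set (fun x => C x /\ x <> b).
Proof.
  intros HC [L HL]. apply HC. exists (b :: L). intros x Hx.
  destruct (classic (x = b)); [left | right; apply HL]; auto.
Qed.

Lemma infinite_pigeonhole {T U} (C : T -> Prop) (g : T -> U) (L : list U) :
  infinite_set C -> (forall c, C c -> In (g c) L) ->
  exists u, infinite_set (fun c => C c /\ g c = u).
Proof.
  revert C. induction L as [|a L IH]; intros C HC HL.
  - destruct (infinite_nonempty C HC) as [c Hc]. destruct (HL c Hc).
  - destruct (finite_or_infinite (fun c => C c /\ g c = a)) as [[La HLa]|Ha]; eauto.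
    destruct (IH (fun c => C c /\ g c <> a)) as [u Hu].
    + intros [M HM]. apply HC. exists (La ++ M). intros x Hx. apply in_or_app.
      destruct (classic (g x = a)); [left; apply HLa | right; apply HM]; auto.
    + intros c [Hc Hne]. destruct (HL c Hc); [congruence | assumption].
    + exists u. apply (infinite_mono _ _ Hu). tauto.
Qed.

Lemma infinite_finite_image {T U} (C : T -> Prop) (g : T -> U) :
  infinite_set C -> finite_set (fun u => exists c, C c /\ u = g c) ->
  exists u, infinite_set (fun c => C c /\ g c = u).
Proof.
  intros HC [L HL]. apply (infinite_pigeonhole C g L HC).
  intros c Hc. apply HL. eauto.
Qed.

Lemma infinite_injective_image {I T} (b : I -> T) (S : I -> Prop) :
  (forall i j, b i = b j -> i = j) -> infinite_set S ->
  infinite_set (fun a => exists i, S i /\ a = b i).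
Proof.
  intros Hinj HS Hfin.
  destruct (infinite_finite_image S b HS) as [u Hu].
  { destruct Hfin as [L HL]. exists L. intros a [i [Hi ->]]. apply HL. eauto. }
  destruct (infinite_nonempty _ Hu) as [i0 [_ Hi0]].
  destruct (infinite_nonempty _ (infinite_remove _ i0 Hu)) as [i1 [[_ Hi1] Hne]].
  apply Hne, Hinj. congruence.
Qed.

Lemma nat_infinite : infinite_set (fun _ : nat => True).
Proof.
  intros [L HL].
  assert (Hmax : Forall (fun k => k <= list_max L) L) by (apply list_max_le; lia).
  rewrite Forall_forall in Hmax.
  specialize (Hmax (S (list_max L)) (HL _ I)). lia.
Qed.

(* The sequence is built by dependent choice:
   pick b in the current infinite set C, and pass to an infinite C' on which
   g b takes a constant value. *)
Section ChainLemma.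
Variables (T U : Type) (g : T -> T -> U) (D : T -> Prop).
Hypothesis D_infinite : infinite_set D.
Hypothesis rows_finite :
  forall a, D a -> finite_set (fun u => exists d, D d /\ u = g a d).

Definition step_spec (C : T -> Prop) (p : T * U * (T -> Prop)) : Prop :=
  let '(b, u, C') := p in
  C b /\ infinite_set C' /\ forall c, C' c -> C c /\ c <> b /\ g b c = u.

Lemma step_exists (C : T -> Prop) :
  infinite_set C -> (forall c, C c -> D c) -> exists p, step_spec C p.
Proof.
  intros HC HCD. destruct (infinite_nonempty C HC) as [b Hb].
  destruct (infinite_finite_image (fun c => C c /\ c <> b) (g b)) as [u Hu].
  - apply infinite_remove, HC.
  - destruct (rows_finite b (HCD b Hb)) as [L HL].
    exists L. intros v [c [[Hc _] ->]]. apply HL. eauto.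
  - exists (b, u, fun c => (C c /\ c <> b) /\ g b c = u). simpl.
    split; [exact Hb|]. split; [exact Hu|]. tauto.
Qed.

Lemma triple_inhabited : inhabited (T * U * (T -> Prop)).
Proof.
  destruct (infinite_nonempty D D_infinite) as [d _]. exact (inhabits (d, g d d, D)).
Qed.

Definition step (C : T -> Prop) : T * U * (T -> Prop) :=
  epsilon triple_inhabited (step_spec C).
Definition stage (n : nat) : T -> Prop := Nat.iter n (fun C => snd (step C)) D.
Definition chain (n : nat) : T := fst (fst (step (stage n))).
Definition label (n : nat) : U := snd (fst (step (stage n))).

Lemma stage_valid (n : nat) :
  infinite_set (stage n) /\ (forall c, stage n c -> D c) /\
  step_spec (stage n) (step (stage n)).
Proof.
  induction n as [|n [Hinf [Hsub Hstep]]].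
  - assert (Hstep : step_spec D (step D)).
    { unfold step; apply epsilon_spec, step_exists; auto. }
    simpl. auto.
  - change (stage (S n)) with (snd (step (stage n))).
    destruct (step (stage n)) as [[b u] C'] eqn:Hs. simpl in Hstep |- *.
    destruct Hstep as [_ [HC' HC'sub]].
    assert (Hsub' : forall c, C' c -> D c) by (intros c Hc; apply Hsub, HC'sub, Hc).
    split; [exact HC'|]. split; [exact Hsub'|].
    unfold step; apply epsilon_spec, step_exists; auto.
Qed.

Lemma stage_decreasing (k n : nat) (c : T) : stage (k + n) c -> stage n c.
Proof.
  induction k as [|k IH]; [auto|]. intros Hc. apply IH.
  destruct (stage_valid (k + n)) as [_ [_ Hstep]].
  change (stage (S k + n)) with (snd (step (stage (k + n)))) in Hc.
  destruct (step (stage (k + n))) as [[b u] C']. simpl in Hstep, Hc.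
  apply (proj2 (proj2 Hstep) c Hc).
Qed.

Lemma ramsey_chain :
  exists (b : nat -> T) (f : nat -> U), (forall i, D (b i)) /\
    forall i j, i < j -> b j <> b i /\ g (b i) (b j) = f i.
Proof.
  exists chain, label. split.
  - intros i. destruct (stage_valid i) as [_ [Hsub Hstep]]. apply Hsub.
    unfold chain. destruct (step (stage i)) as [[b u] C']. exact (proj1 Hstep).
  - intros i j Hij.
    assert (Hj : stage (S i) (chain j)).
    { destruct (stage_valid j) as [_ [_ Hstep]].
      apply (stage_decreasing (j - S i)). replace (j - S i + S i) with j by lia.
      unfold chain. destruct (step (stage j)) as [[b u] C']. exact (proj1 Hstep). }
    destruct (stage_valid i) as [_ [_ Hstep]].
    change (stage (S i)) with (snd (step (stage i))) in Hj.
    unfold label. change (chain i) with (fst (fst (step (stage i)))). destruct (step (stage i)) as [[b u] C'].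
    simpl in Hstep, Hj |- *. destruct (proj2 (proj2 Hstep) _ Hj) as [_ [Hne Hg]]. auto.
Qed.

End ChainLemma.

Section Semigroup.
Variable T : Type.
Variable mul : T -> T -> T.
Hypothesis mulA : forall x y z, mul x (mul y z) = mul (mul x y) z.

Lemma spow_add (x : T) (a b : nat) :
  spow mul x (S (a + b)) = mul (spow mul x a) (spow mul x b).
Proof.
  induction a as [|a IH]; [reflexivity|].
  change (mul x (spow mul x (S (a + b))) = mul (mul x (spow mul x a)) (spow mul x b)).
  rewrite IH, mulA. reflexivity.
Qed.

Lemma center_mul (x y : T) : center mul x -> center mul y -> center mul (mul x y).
Proof.
  intros Hx Hy z.
  rewrite <- mulA, (Hy z), mulA, (Hx z), <- mulA. reflexivity.
Qed.

Lemma center_spow (x : T) (n : nat) : center mul x -> center mul (spow mul x n).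
Proof. intros Hx. induction n; simpl; auto using center_mul. Qed.

Lemma mul_swap_middle (a b c d : T) :
  mul b c = mul c b -> mul (mul a b) (mul c d) = mul (mul a c) (mul b d).
Proof.
  intros Hbc. rewrite <- (mulA a b), (mulA b c d), Hbc, <- (mulA c b d), (mulA a c). reflexivity.
Qed.

Lemma spow_mul_central (c x : T) (n : nat) :
  center mul c -> spow mul (mul c x) n = mul (spow mul c n) (spow mul x n).
Proof.
  intros Hc. induction n as [|n IH]; [reflexivity|].
  change (mul (mul c x) (spow mul (mul c x) n)
          = mul (mul c (spow mul c n)) (mul x (spow mul x n))).
  rewrite IH. apply mul_swap_middle. symmetry. apply center_spow, Hc.
Qed.

Lemma spow_square_central (c : T) (m : nat) :
  center mul c -> spow mul (mul c c) m = spow mul c (S (m + m)).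
Proof. intros Hc. rewrite spow_mul_central, spow_add; auto. Qed.

Variable e : T.
Variable l : nat.

Definition fixed (x : T) : Prop := mul e x = x.

Lemma fixed_mul_r (x y : T) : fixed x -> fixed (mul x y).
Proof. unfold fixed. intros Hx. rewrite mulA, Hx. reflexivity. Qed.

Lemma fixed_spow (c : T) (n : nat) : fixed c -> fixed (spow mul c n).
Proof. intros Hc. destruct n; [exact Hc | apply fixed_mul_r, Hc]. Qed.

Lemma fixed_spow_mono (c : T) (n m : nat) :
  fixed (spow mul c n) -> n <= m -> fixed (spow mul c m).
Proof.
  intros Hn Hle. destruct (Nat.eq_dec n m) as [<-|]; [exact Hn|].
  replace m with (S (n + (m - n - 1))) by lia. rewrite spow_add. apply fixed_mul_r, Hn.
Qed.

Lemma Hgrp_mul (x x' : T) : Hgrp mul e x -> Hgrp mul e x' -> Hgrp mul e (mul x x').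
Proof.
  intros [h1 [h2 [y [y1 [y2 [y3 y4]]]]]] [h1' [h2' [y' [y1' [y2' [y3' y4']]]]]].
  split; [rewrite mulA, h1; reflexivity|]. split; [rewrite <- mulA, h2'; reflexivity|].
  exists (mul y' y). split; [rewrite mulA, y1'; reflexivity|].
  split; [rewrite <- mulA, y2; reflexivity|]. split.
  - rewrite <- (mulA x x' (mul y' y)), (mulA x' y' y), y3', y1, y3. reflexivity.
  - rewrite <- (mulA y' y (mul x x')), (mulA y x x'), y4, h1', y4'. reflexivity.
Qed.

Lemma Zn_mul (z w : T) : Zn mul e l z -> Zn mul e l w -> Zn mul e l (mul z w).
Proof.
  intros [Hz Gz] [Hw Gw]. split; [apply center_mul; auto|].
  unfold pw in *. rewrite spow_mul_central by exact Hz. apply Hgrp_mul; auto.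
Qed.

(* An e-fixed element of Z_l lies in H_e: if g = z^l has inverse y in H_e,
   then z^(2l-1) y y is an inverse of z. *)
Lemma Zn_fixed_Hgrp (z : T) : Zn mul e l z -> fixed z -> Hgrp mul e z.
Proof.
  intros [Hc [_ [_ [y [Hy1 [Hy2 [Hy3 _]]]]]]] Hez. unfold pw in *.
  set (g := spow mul z (l - 1)) in *.
  set (w := mul (spow mul z (l - 1 + (l - 1))) (mul y y)).
  assert (Hzw : mul z w = e).
  { unfold w. rewrite mulA.
    change (mul z (spow mul z (l - 1 + (l - 1)))) with (spow mul z (S (l - 1 + (l - 1)))).
    rewrite spow_add. fold g.
    rewrite <- (mulA g g (mul y y)), (mulA g y y), Hy3, Hy1, Hy3. reflexivity. }
  split; [exact Hez|]. split; [rewrite (Hc e); exact Hez|].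
  exists w. split; [unfold w; rewrite mulA, (fixed_spow z _ Hez); reflexivity|].
  split; [unfold w; rewrite <- mulA, <- (mulA y y e), Hy2; reflexivity|].
  split; [exact Hzw | rewrite <- (Hc w); exact Hzw].
Qed.

(* If a central a is absorbed as a = a (c w) with c in Z_l, then a is
   e-fixed: iterating gives a = a c^l w^l, and c^l is e-fixed. *)
Lemma fixed_of_absorbed (a c w : T) :
  center mul a -> Zn mul e l c -> a = mul a (mul c w) -> fixed a.
Proof.
  intros Ha [Hc [Eg _]] Habs.
  assert (Hiter : forall n, a = mul a (spow mul (mul c w) n)).
  { induction n as [|n IH]; [exact Habs|].
    change (spow mul (mul c w) (S n)) with (mul (mul c w) (spow mul (mul c w) n)).
    rewrite mulA, <- Habs. exact IH. }
  specialize (Hiter (l - 1)). rewrite spow_mul_central in Hiter by exact Hc.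
  unfold pw in Eg. unfold fixed. rewrite Hiter at 1.
  rewrite mulA, <- (Ha e), <- (mulA a e), (mulA e), Eg. symmetry. exact Hiter.
Qed.

Definition conclusion : Prop :=
  exists (F' : T -> Prop) (A' : T -> Prop),
    (exists f1 f2 : T, forall x, F' x -> x = f1 \/ x = f2) /\
    infinite_set A' /\
    (forall a, A' a -> Zn mul e l a) /\
    (forall a b, A' a -> A' b -> F' (mul a b) \/ Hgrp mul e (mul a b)) /\
    (forall a, A' a -> ~ FX1 mul F' a).

Lemma direct_conclusion (A : T -> Prop) :
  infinite_set A -> (forall a, A a -> Zn mul e l a) ->
  (forall a b, A a -> A b -> fixed (mul a b)) -> conclusion.
Proof.
  intros HA HZ Hfix. exists (fun _ => False), A.
  split; [exists e, e; intros _ []|]. split; [exact HA|]. split; [exact HZ|]. split.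
  - intros a b Ha Hb. right. apply Zn_fixed_Hgrp; auto using Zn_mul.
  - intros a _ [[]|[f [x [[] _]]]].
Qed.

(* Two-valued case: squares equal s and products of distinct elements equal
   f0.  Then F' = {s, f0} \ H_e works; an element of F'X^1 in A would be
   absorbed, forcing s and f0 into H_e. *)
Lemma two_value_conclusion (A : T -> Prop) (s f0 : T) :
  infinite_set A -> (forall a, A a -> Zn mul e l a) ->
  (forall a, A a -> mul a a = s) ->
  (forall a b, A a -> A b -> a <> b -> mul a b = f0) -> conclusion.
Proof.
  intros HA HZ Hsq Hoff.
  exists (fun x => (x = s /\ ~ Hgrp mul e s) \/ (x = f0 /\ ~ Hgrp mul e f0)), A.
  split; [exists s, f0; intros x [[-> _]|[-> _]]; auto|].
  split; [exact HA|]. split; [exact HZ|]. split.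
  { intros a b Ha Hb. destruct (classic (a = b)) as [<-|Hne].
    - rewrite (Hsq a Ha). destruct (classic (Hgrp mul e s)); auto.
    - rewrite (Hoff a b Ha Hb Hne). destruct (classic (Hgrp mul e f0)); auto. }
  intros a Ha HF.
  destruct (infinite_nonempty _ (infinite_remove A a HA)) as [b [Hb Hba]].
  assert (Hab : mul a b = f0) by (apply Hoff; auto).
  assert (Hboth : forall c w, Zn mul e l c -> a = mul a (mul c w) ->
                  Hgrp mul e s /\ Hgrp mul e f0).
  { intros c w Hc Habs.
    assert (Hfa : fixed a) by (apply (fixed_of_absorbed a c w); [apply HZ|..]; auto).
    rewrite <- (Hsq a Ha), <- Hab.
    split; apply Zn_fixed_Hgrp; auto using Zn_mul, fixed_mul_r. }
  destruct HF as [[[Es Hn]|[Ef Hn]]|[f [x [[[Es Hn]|[Ef Hn]] Ex]]]];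
    apply Hn.
  - apply (Hboth a a); [apply HZ, Ha|]. rewrite (Hsq a Ha), <- Es, (Hsq a Ha). exact Es.
  - apply (Hboth b b); [apply HZ, Hb|]. rewrite mulA, Hab, <- Ef, Hab, <- Ef. reflexivity.
  - apply (Hboth a x); [apply HZ, Ha|]. rewrite mulA, (Hsq a Ha), <- Es. exact Ex.
  - apply (Hboth b x); [apply HZ, Hb|]. rewrite mulA, Hab, <- Ef. exact Ex.
Qed.

Definition controlled (k : nat) (C : T -> Prop) : Prop :=
  forall x y, C x -> C y -> exists t z, Zn mul e l t /\ fixed (spow mul t k) /\
    mul x y = mul t z /\ mul x x = mul t t.

Definition descends (k : nat) : Prop :=
  conclusion \/ exists C', infinite_set C' /\ (forall c, C' c -> Zn mul e l c) /\
                           controlled k C'.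

(* Either the labels
   f_i form an infinite set, controlled by s, or they are constant on an
   infinite set of indices, which is the two-valued case. *)
Lemma chain_descends (k : nat) (s : T) (b f : nat -> T) :
  Zn mul e l s -> fixed (spow mul s k) ->
  (forall i, Zn mul e l (b i)) -> (forall i, mul (b i) (b i) = s) ->
  (forall i j, i < j -> b j <> b i /\ mul (b i) (b j) = f i) -> descends k.
Proof.
  intros Zs Fs Zb Hsq Hch.
  assert (Cb : forall i, center mul (b i)) by (intros i; apply Zb).
  assert (Hf : forall i j, i < j -> f i = mul (b i) (b j)) by (intros; symmetry; apply Hch; auto).
  destruct (finite_or_infinite (fun y => exists i, True /\ y = f i)) as [Hfin|Hinf].
  - left. destruct (infinite_finite_image _ f nat_infinite Hfin) as [f0 HS].
    assert (Hinj : forall i j, b i = b j -> i = j).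
    { intros i j Hij. destruct (Nat.lt_total i j) as [H|[H|H]]; [| exact H |];
        exfalso; apply (Hch _ _ H); auto. }
    apply (two_value_conclusion _ s f0 (infinite_injective_image b _ Hinj HS)).
    + intros a [i [_ ->]]. apply Zb.
    + intros a [i [_ ->]]. apply Hsq.
    + intros a a' [i [[_ Hi] ->]] [j [[_ Hj] ->]] Hne.
      destruct (Nat.lt_total i j) as [H|[<-|H]]; [| congruence |].
      * rewrite <- (Hf i j H). exact Hi.
      * rewrite (Cb i), <- (Hf j i H). exact Hj.
  - right. exists (fun y => exists i, True /\ y = f i). split; [exact Hinf|]. split.
    + intros x [i [_ ->]]. rewrite (Hf i (S i)) by lia. apply Zn_mul; apply Zb.
    + intros x y [i [_ ->]] [j [_ ->]]. exists s, (mul (b i) (b j)).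
      rewrite (Hf i (S (i + j))), (Hf j (S (i + j))) by lia.
      rewrite !(mul_swap_middle (b _) (b (S (i + j)))) by (symmetry; apply Cb).
      rewrite !Hsq. split; [exact Zs|]. split; [exact Fs|]. split; [symmetry; apply (proj1 Zs) | reflexivity].
Qed.

(* Constant-square case: all elements of D square to s.  Either a row d0 D
   is infinite, controlled by s = d0 d0, or all rows are finite and the chain
   lemma applies. *)
Lemma constant_square_descends (k : nat) (D : T -> Prop) (s : T) :
  infinite_set D -> (forall d, D d -> Zn mul e l d) -> (forall d, D d -> mul d d = s) ->
  Zn mul e l s -> fixed (spow mul s k) -> descends k.
Proof.
  intros HD ZD Hsq Zs Fs.
  destruct (classic (exists d0, D d0 /\ infinite_set (fun y => exists d, D d /\ y = mul d0 d)))
    as [[d0 [Hd0 Hrow]]|Hrows].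
  - right. exists (fun y => exists d, D d /\ y = mul d0 d). split; [exact Hrow|]. split.
    + intros y [d [Hd ->]]. apply Zn_mul; auto.
    + intros x y [d [Hd ->]] [d' [Hd' ->]]. exists s, (mul d d').
      rewrite !(mul_swap_middle d0 d d0) by apply (ZD d Hd).
      rewrite !Hsq by assumption. split; [exact Zs|]. split; [exact Fs|]. auto.
  - destruct (ramsey_chain T T mul D HD) as [b [f [Hb Hch]]].
    { intros d0 Hd0. destruct (finite_or_infinite (fun u => exists d, D d /\ u = mul d0 d))
        as [Hfin|Hinf]; [exact Hfin | exfalso; eauto]. }
    apply (chain_descends k s b f Zs Fs); auto.
Qed.

(* A round of the descent: if the squares of C are infinitely many they form
   a controlled set; otherwise infinitely many elements share one square. *)
Lemma descent_step (k : nat) (C : T -> Prop) :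
  infinite_set C -> (forall c, C c -> Zn mul e l c) ->
  (forall c, C c -> fixed (spow mul (mul c c) k)) -> descends k.
Proof.
  intros HC ZC Fk.
  destruct (finite_or_infinite (fun x => exists c, C c /\ x = mul c c)) as [Hfin|Hinf].
  - destruct (infinite_finite_image C (fun c => mul c c) HC Hfin) as [s HD].
    destruct (infinite_nonempty _ HD) as [d1 [Hd1 Hs1]].
    apply (constant_square_descends k _ s HD); [intros d [Hd _]; auto | tauto | ..];
      rewrite <- Hs1; auto using Zn_mul.
  - right. exists (fun x => exists c, C c /\ x = mul c c). split; [exact Hinf|]. split.
    + intros x [c [Hc ->]]. apply Zn_mul; auto.
    + intros x y [c [Hc ->]] [c' [Hc' ->]]. exists (mul c c), (mul c' c').
      split; [apply Zn_mul; auto|]. auto.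
Qed.

Lemma descent (k : nat) : forall C : T -> Prop,
  infinite_set C -> (forall c, C c -> Zn mul e l c) ->
  (forall c, C c -> fixed (spow mul (mul c c) k)) -> conclusion.
Proof.
  induction k as [|k IH]; intros C HC ZC Fk;
    destruct (descent_step _ C HC ZC Fk) as [Hconc|[C' [HC' [ZC' Hctl]]]]; auto.
  - apply (direct_conclusion C' HC' ZC'). intros x y Hx Hy.
    destruct (Hctl x y Hx Hy) as [t [z [_ [Ft [-> _]]]]]. apply fixed_mul_r, Ft.
  - apply (IH C' HC' ZC'). intros x Hx.
    destruct (Hctl x x Hx Hx) as [t [z [Zt [Ft [_ ->]]]]].
    rewrite spow_square_central by apply Zt.
    apply (fixed_spow_mono t (S k)); [exact Ft | lia].
Qed.

End Semigroup.

Theorem mainTheorem18 (T : Type) (mul : T -> T -> T)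
  (mulA : forall x y z : T, mul x (mul y z) = mul (mul x y) z)
  (hper : periodic mul)
  (e : T) (he : idempotent mul e)
  (l : nat) (hl : 1 <= l)
  (hinf : infinite_set (fun z => Zn mul e l z /\ ~ Hgrp mul e z)) :
  exists (F' : T -> Prop) (A' : T -> Prop),
    (exists f1 f2 : T, forall x, F' x -> x = f1 \/ x = f2) /\
    infinite_set A' /\
    (forall a, A' a -> Zn mul e l a) /\
    (forall a b, A' a -> A' b -> F' (mul a b) \/ Hgrp mul e (mul a b)) /\
    (forall a, A' a -> ~ FX1 mul F' a).
Proof.
  (* Start the descent from Z_l \ H_e at level l: (c c)^(l+1) = c^(2l+2) is
     e-fixed because c^l lies in H_e. *)
  apply (descent T mul mulA e l l _ hinf).
  - intros c [Zc _]. exact Zc.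
  - intros c [[Cc [Hg _]] _]. rewrite (spow_square_central T mul mulA) by exact Cc.
    apply (fixed_spow_mono T mul mulA e c (l - 1)); [exact Hg | lia].
Qed.
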